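(* Let $A\in\{\mathbb Z,\mathbb R\}$ and let $K,X\subset\mathbb R^d$ be $d$-dimensional convex bodies. If $K$ is $A$-$X$-free and inclusion-maximal among $A$-$X$-free convex bodies, then $K$ contains an $A$-unimodular copy of $X$.
   Context: A convex body is a nonempty compact convex subset of $\mathbb R^d$. An $A$-unimodular transformation is a map $T(x)=Mx+b$ with $M\in \mathrm{GL}_d(\mathbb Z)$ and $b\in A^d$; an $A$-unimodular copy of $X$ is $T(X)$ for such a $T$. A convex set is $A$-$X$-free if its relative interior contains no $A$-unimodular copy of $X$. *)

From HB Require Import structures.
From mathcomp Require Import all_boot all_order all_algebra.
From mathcomp Require Import all_classical all_reals topology normedtype.
Set Implicit Arguments. Unset Strict Implicit. Unset Printing Implicit Defensive.
Import Order.TTheory GRing.Theory Num.Theory.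
Import numFieldNormedType.Exports.
Local Open Scope classical_set_scope.
Local Open Scope ring_scope.

(* The additive group A of translations: A = Z or A = R. *)
Inductive Agroup := AZ | AR.

Section Defs.
Variables (R : realType) (d : nat).
Local Notation V := 'cV[R]_d.

Definition convex_set (S : set V) : Prop :=
  forall x y, S x -> S y -> forall t : R, 0 <= t -> t <= 1 ->
    S (t *: x + (1 - t) *: y).

Definition convex_body (S : set V) : Prop :=
  S !=set0 /\ compact S /\ convex_set S.

Definition aff_hull (S : set V) : set V :=
  [set x | exists (n : nat) (p : 'I_n -> V) (w : 'I_n -> R),
      (forall i, S (p i)) /\ \sum_(i < n) w i = 1 /\
      x = \sum_(i < n) w i *: p i].

Definition full_dim (S : set V) : Prop := aff_hull S = setT.

Definition relint (S : set V) : set V :=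
  [set x | S x /\ exists e : R, 0 < e /\
      forall y, ball x e y -> aff_hull S y -> S y].

Definition GLZ (M : 'M[int]_d) : Prop := \det M = 1 \/ \det M = -1.

Definition in_A (A : Agroup) (b : V) : Prop :=
  match A with
  | AZ => forall i, b i 0 \is a Num.int
  | AR => True
  end.

Definition unimod_map (M : 'M[int]_d) (b : V) (x : V) : V :=
  map_mx (fun z : int => z%:~R) M *m x + b.

Definition contains_A_copy (A : Agroup) (X S : set V) : Prop :=
  exists (M : 'M[int]_d) (b : V),
    GLZ M /\ in_A A b /\ (unimod_map M b @` X) `<=` S.

Definition A_X_free (A : Agroup) (X S : set V) : Prop :=
  ~ contains_A_copy A X (relint S).

End Defs.

From HB Require Import structures.
From mathcomp Require Import all_boot all_order all_algebra.
From mathcomp Require Import all_classical all_reals topology normedtype.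
From mathcomp Require Import zify.
Set Implicit Arguments. Unset Strict Implicit. Unset Printing Implicit Defensive.
Import Order.TTheory GRing.Theory Num.Theory.
Import numFieldNormedType.Exports.
Local Open Scope classical_set_scope.
Local Open Scope ring_scope.

(* Each thickening K_n of K by
   the cube of side 2/(n+1) is a strictly larger convex body, so by maximality
   its relative interior contains a unimodular copy M_n X + b_n.  As X is
   full-dimensional and all K_n lie in the bounded set K_0, the integer
   matrices M_n are bounded; having finitely many values, one matrix M serves
   for every n (the K_n decrease).  The translations b_n then stay in a compact
   set; a cluster point beta lies in the closed set A^d and M X + beta lies in
   the intersection of the closed sets K_n, which is K. *)

Lemma antitone_common_witness (T : finType) (Q : nat -> T -> Prop) :
  (forall n m t, (n <= m)%N -> Q m t -> Q n t) ->
  (forall n, exists t, Q n t) -> exists t, forall n, Q n t.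
Proof.
move=> QA Qn; apply: contrapT => /forallNP noQ.
have /choice[f Qf] t : exists n, ~ Q n t by apply/existsNP.
have [t Qt] := Qn (\max_t f t)%N.
by apply: (Qf t); apply: QA Qt; exact: leq_bigmax.
Qed.

Definition shifted_int_mx m n N (f : 'M['I_(N + N).+1]_(m, n)) : 'M[int]_(m, n) :=
  \matrix_(i, j) ((f i j)%:Z - N%:Z).

Lemma bounded_int_mxP m n N (M : 'M[int]_(m, n)) :
  (forall i j, `|M i j| < N%:Z) -> exists f, M = @shifted_int_mx m n N f.
Proof.
move=> MN; exists (\matrix_(i, j) inord (absz (M i j + N%:Z))).
apply/matrixP => i j; rewrite !mxE.
have /andP[lo hi] : - N%:Z < M i j < N%:Z by rewrite -ltr_norml.
rewrite inordK; lia.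
Qed.

Lemma compact_norm_bound (K : realType) (W : normedModType K) (S : set W) :
  compact S -> exists2 B : K, 0 <= B & forall x, S x -> `|x| <= B.
Proof.
move=> /compact_bounded[B [Breal SB]].
exists (`|B| + 1) => [|x Sx]; first by rewrite addr_ge0.
apply: (SB (`|B| + 1)) Sx.
by apply: le_lt_trans (real_ler_norm Breal) _; rewrite ltrDl.
Qed.

Lemma norm_comb_le (K : numFieldType) (W : normedModType K) n
    (w : 'I_n -> K) (y : 'I_n -> W) (B : K) :
  (forall i, `|y i| <= B) -> `|\sum_i w i *: y i| <= (\sum_i `|w i|) * B.
Proof.
move=> yB; rewrite mulr_suml; apply: le_trans (ler_norm_sum _ _ _) _.
by apply: ler_sum => i _; rewrite normrZ ler_wpM2l.
Qed.

Lemma cluster_closed_seq (T U : topologicalType) (u : nat -> T) (t : T)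
    (f : T -> U) (C : set U) (n0 : nat) :
  cluster (u @ \oo) t -> continuous f -> closed C ->
  (forall m, (n0 <= m)%N -> C (f (u m))) -> C (f t).
Proof.
move=> ut cf clC uC; apply: clC => W /cf Wt.
have [y [Cy Wy]] := ut (f @^-1` C) _ (ex_intro2 _ _ n0 I uC) Wt.
by exists (f y).
Qed.

Section MatrixNorm.
Variable R : realType.

Lemma mx_norm_entry m n (x : 'M[R]_(m, n)) i j : `|x i j| <= `|x|.
Proof.
rewrite [`|x|]mx_normrE; apply/bigmax_geP; right; by exists (i, j).
Qed.

Lemma mx_norm_le m n (x : 'M[R]_(m, n)) c :
  0 <= c -> (forall i j, `|x i j| <= c) -> `|x| <= c.
Proof.
move=> c0 xc; rewrite [`|x|]mx_normrE.
by apply/bigmax_leP; split => // -[i j] _; exact: xc.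
Qed.

Lemma trmx_norm m n (x : 'M[R]_(m, n)) : `|x^T| = `|x|.
Proof.
apply/le_anti/andP; split; apply: mx_norm_le => // i j.
  by rewrite mxE; exact: mx_norm_entry.
by have := mx_norm_entry x^T j i; rewrite mxE.
Qed.

Lemma trmx_continuous m n : continuous (@trmx R m n).
Proof.
move=> x B /(nbhs_ballP x^T) [e e0 eB]; apply/nbhs_ballP; exists e => // y.
rewrite -!ball_normE /= => xy; apply: eB.
by rewrite -!ball_normE /= -linearB trmx_norm.
Qed.

Lemma cV_norm_le_compact n (e : R) : compact [set u : 'cV[R]_n | `|u| <= e].
Proof.
have -> : [set u : 'cV[R]_n | `|u| <= e] = trmx @` [set r : 'rV[R]_n | `|r| <= e].
  apply/seteqP; split => u.
    by move=> ue; exists u^T; rewrite /= ?trmx_norm ?trmxK.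
  by move=> [r re <-]; rewrite /= trmx_norm.
apply: continuous_compact; first exact/continuous_subspaceT/trmx_continuous.
apply: bounded_closed_compact.
  exists e; split => [|B eB r /= re]; first exact: num_real.
  exact: le_trans re (ltW eB).
exact: (proj1 (continuous_closedP _) (@norm_continuous _ _) _ (@closed_le R e)).
Qed.

Lemma closed_int : closed [set r : R | r \is a Num.int].
Proof.
rewrite -[X in closed X]setCK; apply: open_closedC; rewrite openE => r /= rZ.
set fl := Num.floor r.
have /andP[flr rfl] := floor_itv r.
have {}flr : fl%:~R < r.
  by rewrite lt_neqAle flr andbT; apply/eqP => flE; apply: rZ; rewrite -flE intr_int.
apply: (@filterS _ _ _ `]fl%:~R, (fl + 1)%:~R[); last first.
  by apply: (open_nbhs_nbhs _); split; [exact: itv_open | rewrite /= in_itv /= flr rfl].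
move=> z; rewrite /= in_itv /= => /andP[flz zfl] /intrP[k zk].
by move: flz zfl; rewrite zk !ltr_int; lia.
Qed.

Lemma closed_int_points n : closed [set b : 'cV[R]_n | forall i, b i 0 \is a Num.int].
Proof.
rewrite [X in closed X](_ : _ =
  \bigcap_i (fun b : 'cV[R]_n => b i 0) @^-1` [set r | r \is a Num.int]).
  apply: closed_bigI => i _.
  exact: (proj1 (continuous_closedP _) (@coord_continuous R n 1 i 0) _ closed_int).
by apply/seteqP; split => b bZ i; [move=> _; exact: bZ | exact: bZ].
Qed.

End MatrixNorm.

Section Thickening.
Variables (R : realType) (d : nat).
Local Notation V := 'cV[R]_d.
Implicit Types (K : set V) (e : R).

Definition thickening K e : set V := [set y | exists2 k, K k & `|y - k| <= e].

Lemma thickening_compact K e : compact K -> compact (thickening K e).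
Proof.
move=> cK.
have -> : thickening K e = (fun p : V * V => p.1 + p.2) @` (K `*` [set u | `|u| <= e]).
  apply/seteqP; split => y.
    by move=> [k Kk yk]; exists (k, y - k); rewrite //= addrC subrK.
  by move=> [[k u] [/= Kk ue] <-]; exists k; rewrite // addrAC subrr add0r.
have cKB := compact_setX cK (@cV_norm_le_compact R d e).
apply: continuous_compact cKB.
exact/continuous_subspaceT/add_continuous.
Qed.

Lemma thickening_closed K e : compact K -> closed (thickening K e).
Proof.
by move=> cK; apply: compact_closed; [exact: norm_hausdorff | exact: thickening_compact].
Qed.

Lemma sub_thickening K e : 0 <= e -> K `<=` thickening K e.
Proof. by move=> e0 k Kk; exists k; rewrite // subrr normr0. Qed.

Lemma thickening_le K e e' : e <= e' -> thickening K e `<=` thickening K e'.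
Proof. by move=> ee' y [k Kk yk]; exists k => //; exact: le_trans ee'. Qed.

Lemma thickening_antitone K (n m : nat) : (n <= m)%N ->
  thickening K m.+1%:R^-1 `<=` thickening K n.+1%:R^-1.
Proof. by move=> nm; apply: thickening_le; rewrite lef_pV2 ?posrE // ler_nat. Qed.

Lemma thickening_sub1 K (n : nat) : thickening K n.+1%:R^-1 `<=` thickening K 1.
Proof. by have := thickening_antitone (K := K) (leq0n n); rewrite invr1. Qed.

Lemma thickening_convex K e : convex_set K -> convex_set (thickening K e).
Proof.
move=> cK x y [k Kk xk] [k' Kk' yk'] t t0 t1.
exists (t *: k + (1 - t) *: k'); first exact: cK.
have -> : t *: x + (1 - t) *: y - (t *: k + (1 - t) *: k') =
    t *: (x - k) + (1 - t) *: (y - k') by rewrite !scalerBr opprD addrACA.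
apply: le_trans (ler_normD _ _) _.
rewrite !normrZ (ger0_norm t0) ger0_norm ?subr_ge0 //.
have -> : e = t * e + (1 - t) * e by rewrite -mulrDl addrC subrK mul1r.
by apply: lerD; apply: ler_wpM2l; rewrite ?subr_ge0.
Qed.

Lemma thickening_body K e : 0 <= e -> convex_body K -> convex_body (thickening K e).
Proof.
move=> e0 [[k Kk] [cK cvK]]; split; first by exists k; exact: sub_thickening.
by split; [exact: thickening_compact | exact: thickening_convex].
Qed.

Lemma thickening_neq K e : (0 < d)%N -> compact K -> K !=set0 -> 0 < e ->
  thickening K e <> K.
Proof.
move=> d0 cK [k Kk] e0 Ke.
have [B _ KB] := compact_norm_bound cK.
pose v : V := delta_mx (Ordinal d0) 0.
have v1 : `|v| = 1.
  apply/le_anti/andP; split.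
    by apply: mx_norm_le => // i j; rewrite mxE; case: (_ && _); rewrite ?normr1 ?normr0.
  by have := mx_norm_entry v (Ordinal d0) 0; rewrite mxE !eqxx normr1.
have Kn n : K (k + (n%:R * e) *: v).
  elim: n => [|n IH]; first by rewrite mul0r scale0r addr0.
  rewrite -Ke; exists (k + (n%:R * e) *: v) => //.
  rewrite -natr1 mulrDl mul1r scalerDl addrA [_ - _]addrC addKr.
  by rewrite normrZ v1 mulr1 gtr0_norm.
pose n := (Num.truncn ((B + `|k|) / e)).+1.
have : B + `|k| < n%:R * e by rewrite -ltr_pdivrMr //; exact: truncnS_gt.
apply/negP; rewrite -leNgt.
have -> : n%:R * e = `|(k + (n%:R * e) *: v) - k|.
  by rewrite addrAC subrr add0r normrZ v1 mulr1 ger0_norm // mulr_ge0 // ltW.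
apply: le_trans (ler_normB _ _) _.
by rewrite lerD2r; exact: KB.
Qed.

Lemma closed_thickening_cap K y : closed K ->
  (forall n : nat, thickening K n.+1%:R^-1 y) -> K y.
Proof.
move=> clK Ky; apply: clK => B /nbhs_ballP[e e0 eB].
have [k Kk yk] := Ky (Num.truncn e^-1).
exists k; split => //; apply: eB; rewrite -ball_normE /=.
apply: le_lt_trans yk _.
by rewrite -[ltRHS]invrK ltf_pV2 ?posrE ?invr_gt0 //; exact: truncnS_gt.
Qed.

End Thickening.

Section UnimodularMaps.
Variables (R : realType) (d : nat).
Local Notation V := 'cV[R]_d.

Lemma in_A0 (A : Agroup) : in_A A (0 : V).
Proof. by case: A => // i; rewrite mxE rpred0. Qed.

Lemma GLZ1 : GLZ (1%:M : 'M[int]_d).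
Proof. by left; exact: det1. Qed.

Lemma unimod_map_affine_comb (M : 'M[int]_d) b n (p : 'I_n -> V) (w : 'I_n -> R) :
  \sum_i w i = 1 ->
  unimod_map M b (\sum_i w i *: p i) = \sum_i w i *: unimod_map M b (p i).
Proof.
move=> w1; rewrite /unimod_map; under [RHS]eq_bigr do rewrite scalerDr scalemxAr.
by rewrite big_split /= -scaler_suml w1 scale1r mulmx_sumr.
Qed.

Lemma aff_hull_image_bound (X : set V) z : aff_hull X z ->
  exists C : R, forall M b B,
    (forall x, X x -> `|unimod_map M b x| <= B) -> `|unimod_map M b z| <= C * B.
Proof.
move=> [n [p [w [Xp [w1 ->]]]]]; exists (\sum_i `|w i|) => M b B XB.
by rewrite unimod_map_affine_comb //; apply: norm_comb_le => i; exact: XB.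
Qed.

Lemma unimod_mx_bounded (X : set V) : full_dim X ->
  exists C : R, forall M b B, 0 <= B ->
    (forall x, X x -> `|unimod_map M b x| <= B) ->
    forall i j, `|(M i j)%:~R : R| <= C * B.
Proof.
move=> fX; have hull z : aff_hull X z by rewrite fX.
have [C0 bound0] := aff_hull_image_bound (hull 0).
have /choice[C boundC] := fun j : 'I_d => aff_hull_image_bound (hull (delta_mx j 0)).
exists (\big[Num.max/0]_j C j + C0) => M b B B0 XB i j.
have -> : (M i j)%:~R = (unimod_map M b (delta_mx j 0) - unimod_map M b 0) i 0.
  by rewrite /unimod_map mulmx0 add0r addrK -colE !mxE.
apply: le_trans (mx_norm_entry _ i 0) _; apply: le_trans (ler_normB _ _) _.
rewrite mulrDl; apply: lerD; last exact: bound0.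
apply: le_trans (boundC j _ _ _ XB) _.
by rewrite ler_wpM2r // le_bigmax.
Qed.

End UnimodularMaps.

Section MaximalFreeBody.
Variables (R : realType) (d : nat) (A : Agroup) (X K : set 'cV[R]_d).
Local Notation V := 'cV[R]_d.

Lemma copy_in_dim0 : d = 0%N -> K !=set0 -> contains_A_copy A X K.
Proof.
move=> d0 [k Kk]; exists 1%:M, 0; split; [exact: GLZ1 | split; first exact: in_A0].
move=> y _; suff -> : y = k by [].
by apply/matrixP => i; have := ltn_ord i; rewrite {2}d0.
Qed.

Lemma copy_in_thickening e : (0 < d)%N -> 0 < e -> convex_body K ->
  (forall K', convex_body K' -> A_X_free A X K' -> K `<=` K' -> K' = K) ->
  contains_A_copy A X (thickening K e).
Proof.
move=> d0 e0 bK maxK; have [K0 [cK _]] := bK.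
have /contrapT[M [b [GM [Ab sub]]]] : ~ A_X_free A X (thickening K e).
  move=> free; apply: (thickening_neq d0 cK K0 e0).
  apply: (maxK _ _ free); first exact: thickening_body (ltW e0) bK.
  exact: sub_thickening (ltW e0).
by exists M, b; do 2 split => //; move=> y /sub [].
Qed.

Lemma common_linear_part : full_dim X -> compact K ->
  (forall n : nat, contains_A_copy A X (thickening K n.+1%:R^-1)) ->
  exists M (b : nat -> V), GLZ M /\ forall n, in_A A (b n) /\
    unimod_map M (b n) @` X `<=` thickening K n.+1%:R^-1.
Proof.
move=> fX cK copies.
have [B B0 KB] := compact_norm_bound (thickening_compact (e := 1) cK).
have [C MC] := unimod_mx_bounded fX.
pose N := (Num.truncn (C * B)).+1.
pose Q n (f : 'M['I_(N + N).+1]_d) := exists b, GLZ (shifted_int_mx f) /\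
  in_A A b /\ unimod_map (shifted_int_mx f) b @` X `<=` thickening K n.+1%:R^-1.
have [f Qf] : exists f, forall n, Q n f.
  apply: antitone_common_witness => [n m f nm [b [GM [Ab sub]]] | n].
    by exists b; do 2 split => //; apply: subset_trans sub (thickening_antitone nm).
  have [M [b [GM [Ab sub]]]] := copies n.
  have /bounded_int_mxP[f Mf] : forall i j, `|M i j| < N%:Z.
    move=> i j; rewrite -(ltr_int R) intr_norm; apply: le_lt_trans (truncnS_gt _).
    apply: MC B0 _ i j => x Xx; apply: KB; apply: thickening_sub1; apply: sub.
    exact: imageP.
  by exists f, b; rewrite -Mf.
have /choice[b Qb] := Qf.
exists (shifted_int_mx f), b; split; [exact: (Qb 0%N).1 | move=> n; exact: (Qb n).2].
Qed.

Lemma limit_translation (M : 'M[int]_d) (b : nat -> V) : compact K -> X !=set0 ->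
  (forall n, in_A A (b n) /\ unimod_map M (b n) @` X `<=` thickening K n.+1%:R^-1) ->
  exists2 beta, in_A A beta & unimod_map M beta @` X `<=` K.
Proof.
move=> cK [p Xp] Mb.
pose Mp := map_mx (fun z : int => z%:~R) M *m p.
have shift_continuous (c : V) : continuous (fun y : V => c + y).
  by move=> y; apply: continuousD; [exact: cst_continuous | exact: cvg_id].
pose T := [set c | thickening K 1 (unimod_map M c p)].
have cT : compact T.
  have -> : T = (fun y => - Mp + y) @` thickening K 1.
    apply/seteqP; split => c Tc; first by exists (Mp + c); rewrite // addKr.
    by case: Tc => y Ky <-; rewrite /T /= /unimod_map addNKr.
  exact/continuous_compact/thickening_compact/cK/continuous_subspaceT.
have [beta [_ beta_cl]] : T `&` cluster (b @ \oo) !=set0.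
  apply: cT; exists 0%N => // n _; apply: thickening_sub1; apply: (proj2 (Mb n)).
  exact: imageP.
exists beta.
  apply: (@cluster_closed_seq _ _ b beta id (in_A A) 0 beta_cl) => [||m _].
  - by move=> c; exact: cvg_id.
  - by case: (A); [exact: closed_int_points | exact: closedT].
  - exact: (Mb m).1.
move=> _ [x Xx <-]; apply: (closed_thickening_cap (compact_closed _ cK)) => [|n].
  exact: norm_hausdorff.
apply: (@cluster_closed_seq _ _ b beta (unimod_map M ^~ x) (thickening K _) n beta_cl)
  => [||m nm].
- exact: shift_continuous.
- exact: thickening_closed.
- by apply: thickening_antitone nm _ _; apply: (Mb m).2; exact: imageP.
Qed.

End MaximalFreeBody.

Theorem corollary2p8 (R : realType) (d : nat) (A : Agroup)
    (K X : set 'cV[R]_d) :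
  convex_body X -> full_dim X ->
  convex_body K -> full_dim K ->
  A_X_free A X K ->
  (forall K' : set 'cV[R]_d, convex_body K' -> A_X_free A X K' ->
     K `<=` K' -> K' = K) ->
  contains_A_copy A X K.
Proof.
move=> [X0 _] fX bK _ _ maxK; have [K0 [cK _]] := bK.
have [d0|d_gt0] := posnP d; first exact: copy_in_dim0.
have copies n : contains_A_copy A X (thickening K n.+1%:R^-1).
  by apply: copy_in_thickening; rewrite ?invr_gt0.
have [M [b [GM Mb]]] := common_linear_part fX cK copies.
have [beta Abeta MK] := limit_translation cK X0 Mb.
by exists M, beta.
Qed.
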